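(* Let $\mathbf{A}$ be a finite idempotent algebra, $B$ a subuniverse of $\mathbf{A}$, and $C,D\subseteq A$. Then $(C,D)$ is a $B$-blocker of $\mathbf{A}$ if and only if: (1) $D$ is a subuniverse of $\mathbf{A}$; (2) $\emptyset\neq C\subseteq D$; (3) $C\cap B=\emptyset$; (4) $D\cap B\neq\emptyset$; and (5') for each basic operation $t$ of $\mathbf{A}$, of arity $s$ say, there is an index $i\in\{1,\dots,s\}$ such that $t(d_1,\dots,d_s)\in C$ whenever $d_j\in D$ for all $j$ and $d_i\in C$.
   Context: $B$-blocker: a pair $(C,D)$ of subsets of $A$ such that (1) $D$ is a subuniverse of $\mathbf{A}$; (2) $\emptyset\neq C\subseteq D$; (3) $C\cap B=\emptyset$; (4) $D\cap B\neq\emptyset$; (5) for every $n\ge 1$, $D^n\setminus (D\setminus C)^n$ is a subuniverse of $\mathbf{A}^n$. An algebra is idempotent if every basic operation $f$ satisfies $f(x,\dots,x)\approx x$. *)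

From mathcomp Require Import all_boot.
Set Implicit Arguments. Unset Strict Implicit. Unset Printing Implicit Defensive.

(* An algebra on carrier T is given by a type I of operation symbols,
   an arity function ar, and for each symbol i an operation
   op i : T^(ar i) -> T, where T^k is represented as 'I_k -> T. *)

Definition idempotent_alg (T : Type) (I : Type) (ar : I -> nat)
  (op : forall i, ('I_(ar i) -> T) -> T) : Prop :=
  forall i (x : T), op i (fun _ => x) = x.

Definition subuniverse (T : Type) (I : Type) (ar : I -> nat)
  (op : forall i, ('I_(ar i) -> T) -> T) (S : T -> Prop) : Prop :=
  forall i (a : 'I_(ar i) -> T), (forall j, S (a j)) -> S (op i a).

Definition pow_op (T : Type) (I : Type) (ar : I -> nat)
  (op : forall i, ('I_(ar i) -> T) -> T) (n : nat) :
  forall i, ('I_(ar i) -> ('I_n -> T)) -> ('I_n -> T) :=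
  fun i a k => op i (fun j => a j k).

Definition blocker (T : finType) (I : Type) (ar : I -> nat)
  (op : forall i, ('I_(ar i) -> T) -> T) (B C D : {set T}) : Prop :=
  [/\ subuniverse op (fun x => x \in D),
      C != set0 /\ C \subset D,
      C :&: B = set0,
      D :&: B != set0 &
      forall n : nat, 1 <= n ->
        subuniverse (@pow_op T I ar op n)
          (fun x : 'I_n -> T =>
             (forall k, x k \in D) /\ ~ (forall k, x k \in D :\: C))].

(* Condition (5') gives (5) directly: if the rows of an s x n matrix lie in
   D^n \ (D \ C)^n, the row at the absorbing index i of t has an entry in C,
   and t maps that column into C.  Conversely, if no index of t were absorbing,
   choose for each i a witness d_i with d_i(i) in C but t(d_i) outside C; the
   s x s matrix whose i-th column is d_i has every row in D^s \ (D \ C)^s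
   (row i meets C on the diagonal), while t applied to the columns lands in
   (D \ C)^s, contradicting (5) for n = s.  A nullary operation has no index
   at all, but idempotence then forces A to be trivial, which is incompatible
   with (2)-(4). *)

From mathcomp Require Import all_boot.
From Stdlib Require Import Classical FunctionalExtensionality.

Section Operations.

Variables (T : Type) (I : Type) (ar : I -> nat).
Variable op : forall i, ('I_(ar i) -> T) -> T.

Lemma subuniverse_pow (S : T -> Prop) (n : nat) :
  subuniverse op S ->
  subuniverse (pow_op (n := n) op) (fun x => forall k, S (x k)).
Proof. by move=> clS t a Sa k; apply: clS => j; apply: Sa. Qed.

Lemma idempotent_nullary_trivial (t : I) :
  idempotent_alg op -> ar t = 0 -> forall x y : T, x = y.
Proof.
move=> idem art0 x y.
have const_eq : (fun _ : 'I_(ar t) => x) = (fun _ => y).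
  apply: functional_extensionality => j.
  by have := leq_trans (ltn_ord j) (eq_leq art0).
by rewrite -(idem t x) -(idem t y) const_eq.
Qed.

End Operations.

Arguments subuniverse_pow {T I ar op S n}.
Arguments idempotent_nullary_trivial {T I ar op t}.

Section Blocker.

Variables (T : finType) (I : Type) (ar : I -> nat).
Variable op : forall i, ('I_(ar i) -> T) -> T.
Variables C D : {set T}.

Definition absorbing_index (t : I) (i : 'I_(ar t)) : Prop :=
  forall d : 'I_(ar t) -> T,
    (forall j, d j \in D) -> d i \in C -> op t d \in C.

Definition meets_C_in_D (n : nat) (x : 'I_n -> T) : Prop :=
  (forall k, x k \in D) /\ ~ (forall k, x k \in D :\: C).

Lemma meets_C_in_DP {n : nat} {x : 'I_n -> T} :
  (forall k, x k \in D) -> meets_C_in_D n x <-> exists k, x k \in C.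
Proof.
move=> xD; split=> [[_ not_DC] | [k xkC]].
- have : ~~ [forall k, x k \in D :\: C] by apply/forallP.
  rewrite negb_forall => /existsP [k].
  by rewrite inE xD andbT negbK => xkC; exists k.
- by split=> // /(_ k); rewrite inE xkC.
Qed.

Lemma pow_closed_of_absorbing_index :
  subuniverse op (fun x => x \in D) ->
  (forall t, exists i, absorbing_index t i) ->
  forall n, subuniverse (pow_op (n := n) op) (meets_C_in_D n).
Proof.
move=> clD absorbing n t a rowsC.
have rowsD j : forall k, a j k \in D by case: (rowsC j).
have resD := subuniverse_pow clD t a rowsD.
apply/(meets_C_in_DP resD).
have [i absorbs] := absorbing t.
have [k aikC] := (meets_C_in_DP (rowsD i)).1 (rowsC i).
by exists k; apply: absorbs => // j; apply: rowsD.
Qed.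

Lemma absorbing_index_of_pow_closed (t : I) :
  subuniverse op (fun x => x \in D) ->
  subuniverse (pow_op (n := ar t) op) (meets_C_in_D (ar t)) ->
  exists i, absorbing_index t i.
Proof.
move=> clD clDC; apply: NNPP => no_index.
have witness i : exists d : 'I_(ar t) -> T,
    (forall j, d j \in D) /\ d i \in C /\ op t d \notin C.
  have /not_all_ex_not [d not_absorbs] := not_ex_all_not _ _ no_index i.
  have [dD not_absorbs_d] := imply_to_and _ _ not_absorbs.
  have [diC tdC] := imply_to_and _ _ not_absorbs_d.
  by exists d; split; [|split; [|apply/negP]].
have [d witnessP] := fin_all_exists witness.
pose a j k := d k j.
have rowsD j : forall k, a j k \in D by move=> k; case: (witnessP k) => ->.
have rowsC j : meets_C_in_D (ar t) (a j).
  apply: (meets_C_in_DP (rowsD j)).2.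
  by exists j; case: (witnessP j) => _ [djjC _].
have [_] := clDC t a rowsC; apply=> k.
case: (witnessP k) => dkD [_ tdkC].
by rewrite inE tdkC; apply: clD.
Qed.

End Blocker.

Arguments pow_closed_of_absorbing_index {T I ar op C D}.
Arguments absorbing_index_of_pow_closed {T I ar op C D t}.

Theorem lemma4p6 (T : finType) (I : Type) (ar : I -> nat)
  (op : forall i, ('I_(ar i) -> T) -> T)
  (Hidem : idempotent_alg op)
  (B C D : {set T}) (HB : subuniverse op (fun x => x \in B)) :
  blocker op B C D <->
  [/\ subuniverse op (fun x => x \in D),
      C != set0 /\ C \subset D,
      C :&: B = set0,
      D :&: B != set0 &
      forall t : I, exists i : 'I_(ar t),
        forall d : 'I_(ar t) -> T,
          (forall j, d j \in D) -> d i \in C -> op t d \in C].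
Proof.
split=> [[clD [C_n0 CD] CB0 DB_n0 powD] | [clD CD CB0 DB_n0 absorbing]].
- split=> // t; have [art0 | art_gt0] := posnP (ar t).
  + have [c cC] := set0Pn _ C_n0; have [b /setIP [_ bB]] := set0Pn _ DB_n0.
    have : c \in C :&: B.
      by rewrite inE cC (idempotent_nullary_trivial Hidem art0 c b).
    by rewrite CB0 inE.
  + exact: absorbing_index_of_pow_closed clD (powD _ art_gt0).
- by split=> // n _; apply: pow_closed_of_absorbing_index.
Qed.
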